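(* Let $n\ge3$ and let $i,j,k,l\in\{1,\dots,n\}$ be pairwise distinct indices (whenever they occur). Then in $VP_n$: 1) if $\max\{i,j\}<\max\{k,l\}$ and $\varepsilon=\pm1$, then $\lambda_{kl}^{\lambda_{ij}^{\varepsilon}}=\lambda_{kl}$; 2) if $i<j<k$ or $j<i<k$: $\lambda_{ik}^{\lambda_{ij}}=\lambda_{kj}^{\lambda_{ij}}\lambda_{ik}\lambda_{kj}^{-1}$ and $\lambda_{ik}^{\lambda_{ij}^{-1}}=\lambda_{kj}^{-1}\lambda_{ik}\lambda_{kj}^{\lambda_{ij}^{-1}}$; 3) if $i<j<k$ or $j<i<k$: $\lambda_{ki}^{\lambda_{ij}}=\lambda_{kj}\lambda_{ki}\lambda_{kj}^{-\lambda_{ij}}$ and $\lambda_{ki}^{\lambda_{ij}^{-1}}=\lambda_{kj}^{-\lambda_{ij}^{-1}}\lambda_{ki}\lambda_{kj}$; 4) if $i<j<k$ or $j<i<k$: $\lambda_{jk}^{\lambda_{ij}}=\lambda_{ik}\lambda_{jk}\lambda_{kj}\lambda_{ik}^{-1}\lambda_{kj}^{-\lambda_{ij}}$ and $\lambda_{jk}^{\lambda_{ij}^{-1}}=\lambda_{kj}^{-\lambda_{ij}^{-1}}\lambda_{ik}^{-1}\lambda_{kj}\lambda_{jk}\lambda_{ik}$.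
   Context: Notation: $a^b=b^{-1}ab$, $a^{-b}=(a^b)^{-1}$. The virtual braid group $VB_n$ is the group with generators $\sigma_1,\dots,\sigma_{n-1},\rho_1,\dots,\rho_{n-1}$ and defining relations: $\sigma_i\sigma_{i+1}\sigma_i=\sigma_{i+1}\sigma_i\sigma_{i+1}$, $\sigma_i\sigma_j=\sigma_j\sigma_i$ ($|i-j|\ge2$); $\rho_i\rho_{i+1}\rho_i=\rho_{i+1}\rho_i\rho_{i+1}$, $\rho_i\rho_j=\rho_j\rho_i$ ($|i-j|\ge2$), $\rho_i^2=1$; $\sigma_i\rho_j=\rho_j\sigma_i$ ($|i-j|\ge2$), $\rho_i\rho_{i+1}\sigma_i=\sigma_{i+1}\rho_i\rho_{i+1}$. $VP_n$ is the kernel of the homomorphism $VB_n\to S_n$ sending $\sigma_i,\rho_i$ to $(i,i+1)$. Define $\lambda_{i,i+1}=\rho_i\sigma_i^{-1}$, $\lambda_{i+1,i}=\sigma_i^{-1}\rho_i$, and for $1\le i<j-1\le n-1$: $\lambda_{ij}=\rho_{j-1}\cdots\rho_{i+1}\lambda_{i,i+1}\rho_{i+1}\cdots\rho_{j-1}$, $\lambda_{ji}=\rho_{j-1}\cdots\rho_{i+1}\lambda_{i+1,i}\rho_{i+1}\cdots\rho_{j-1}$. *)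

(* the virtual braid group VB_n as a finitely
   presented group, realised as the term model: group words modulo the
   smallest congruence containing the group axioms and the defining relations. *)
From mathcomp Require Import all_boot.
Set Implicit Arguments. Unset Strict Implicit. Unset Printing Implicit Defensive.

(* Group words on the generators sigma_i, rho_i (i : nat, 1-indexed). *)
Inductive word : Type :=
  | W1 : word
  | Sg : nat -> word
  | Rh : nat -> word
  | Wm : word -> word -> word
  | Wi : word -> word.

Definition valid (n i : nat) : bool := (1 <= i) && (i <= n.-1).

(* Equality in VB_n.  Generators with an index outside 1..n-1 are declared
   trivial, so that the quotient is exactly VB_n. *)
Inductive veq (n : nat) : word -> word -> Prop :=
  | veq_refl a : veq n a a
  | veq_sym a b : veq n a b -> veq n b a
  | veq_trans a b c : veq n a b -> veq n b c -> veq n a c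
  | veq_mul a a' b b' : veq n a a' -> veq n b b' -> veq n (Wm a b) (Wm a' b')
  | veq_inv a a' : veq n a a' -> veq n (Wi a) (Wi a')
  | veq_assoc a b c : veq n (Wm (Wm a b) c) (Wm a (Wm b c))
  | veq_unitl a : veq n (Wm W1 a) a
  | veq_unitr a : veq n (Wm a W1) a
  | veq_invl a : veq n (Wm (Wi a) a) W1
  | veq_invr a : veq n (Wm a (Wi a)) W1
  | veq_Sg_out i : ~~ valid n i -> veq n (Sg i) W1
  | veq_Rh_out i : ~~ valid n i -> veq n (Rh i) W1
  | veq_SSS i : valid n i -> valid n i.+1 ->
      veq n (Wm (Sg i) (Wm (Sg i.+1) (Sg i))) (Wm (Sg i.+1) (Wm (Sg i) (Sg i.+1)))
  | veq_SS i j : valid n i -> valid n j -> (i.+2 <= j) || (j.+2 <= i) ->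
      veq n (Wm (Sg i) (Sg j)) (Wm (Sg j) (Sg i))
  | veq_RRR i : valid n i -> valid n i.+1 ->
      veq n (Wm (Rh i) (Wm (Rh i.+1) (Rh i))) (Wm (Rh i.+1) (Wm (Rh i) (Rh i.+1)))
  | veq_RR i j : valid n i -> valid n j -> (i.+2 <= j) || (j.+2 <= i) ->
      veq n (Wm (Rh i) (Rh j)) (Wm (Rh j) (Rh i))
  | veq_R2 i : valid n i -> veq n (Wm (Rh i) (Rh i)) W1
  | veq_SR i j : valid n i -> valid n j -> (i.+2 <= j) || (j.+2 <= i) ->
      veq n (Wm (Sg i) (Rh j)) (Wm (Rh j) (Sg i))
  | veq_RRS i : valid n i -> valid n i.+1 ->
      veq n (Wm (Rh i) (Wm (Rh i.+1) (Sg i))) (Wm (Sg i.+1) (Wm (Rh i) (Rh i.+1))).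

(* a^b = b^{-1} a b *)
Definition conj (a b : word) : word := Wm (Wi b) (Wm a b).

Definition wprod (s : seq word) : word := foldr Wm W1 s.

(* rasc lo hi = rho_lo rho_{lo+1} ... rho_hi ;  rdesc lo hi = rho_hi ... rho_lo
   (both empty when hi < lo) *)
Definition rasc (lo hi : nat) : word := wprod [seq Rh k | k <- iota lo (hi.+1 - lo)].
Definition rdesc (lo hi : nat) : word := wprod [seq Rh k | k <- rev (iota lo (hi.+1 - lo))].

(* lambda_{ij} for i <> j (1-indexed):
   i < j : lambda_{ij} = rho_{j-1} ... rho_{i+1} (rho_i sigma_i^{-1}) rho_{i+1} ... rho_{j-1}
   j < i : lambda_{ij} = rho_{i-1} ... rho_{j+1} (sigma_j^{-1} rho_j) rho_{j+1} ... rho_{i-1} *)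
Definition lam (i j : nat) : word :=
  if i < j then
    Wm (rdesc i.+1 j.-1) (Wm (Wm (Rh i) (Wi (Sg i))) (rasc i.+1 j.-1))
  else
    Wm (rdesc j.+1 i.-1) (Wm (Wm (Wi (Sg j)) (Rh j)) (rasc j.+1 i.-1)).

Definition inrange (n i : nat) : bool := (1 <= i) && (i <= n).

(* Conjugation by rho_s permutes the lambda's as tau = (s s+1)
   permutes indices: rho_s lambda_xy rho_s = lambda_{tau x, tau y}.  Writing
   lambda_xy as lambda_{x,x+1} (or lambda_{x+1,x}) conjugated by
   rho_{x+1} ... rho_{y-1}, this is a case analysis on the position of s that
   only uses rho_k rho_{k+1} sigma_k = sigma_{k+1} rho_k rho_{k+1} and the
   relations among the rho's.  Adjacent transpositions carry any tuple of
   distinct indices to (1, 2, ...), so the relations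
     lambda_ij lambda_kl = lambda_kl lambda_ij,
     lambda_ki lambda_kj lambda_ij = lambda_ij lambda_kj lambda_ki
   for pairwise distinct indices reduce to lambda_12 lambda_34 = lambda_34 lambda_12
   (far generators commute) and lambda_12 lambda_13 lambda_23 =
   lambda_23 lambda_13 lambda_12 (the braid relation in disguise).  The four
   identities are rearrangements of these two relations. *)

From Pilot Require Import Defs.
From mathcomp Require Import all_boot zify.
From Stdlib Require Import Setoid Morphisms.
Set Implicit Arguments. Unset Strict Implicit.

Definition lam_up i := Wm (Rh i) (Wi (Sg i)).
Definition lam_down i := Wm (Wi (Sg i)) (Rh i).
Definition rconj s w := Wm (Rh s) (Wm w (Rh s)).
Definition far s t := (s.+2 <= t) || (t.+2 <= s).

#[export] Hint Resolve veq_refl : core.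

#[export] Instance veq_equiv n : Equivalence (veq n).
Proof. split; [exact: veq_refl | exact: veq_sym | exact: veq_trans]. Qed.

#[export] Instance Wm_proper n : Proper (veq n ==> veq n ==> veq n) Wm.
Proof. by move=> a a' Ha b b' Hb; apply: veq_mul. Qed.

#[export] Instance Wi_proper n : Proper (veq n ==> veq n) Wi.
Proof. by move=> a a' Ha; apply: veq_inv. Qed.

#[export] Instance conj_proper n : Proper (veq n ==> veq n ==> veq n) Defs.conj.
Proof. by move=> a a' Ha b b' Hb; rewrite /Defs.conj Ha Hb. Qed.

#[export] Instance rconj_proper n s : Proper (veq n ==> veq n) (rconj s).
Proof. by move=> a a' Ha; rewrite /rconj Ha. Qed.

Section GroupLaws.
Variable n : nat.

Lemma veq_mul1_inv a b : veq n (Wm a b) W1 -> veq n b (Wi a).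
Proof. by move=> ab1; rewrite -(veq_unitl n b) -(veq_invl n a) veq_assoc ab1 veq_unitr. Qed.

Lemma veq_invK a : veq n (Wi (Wi a)) a.
Proof. by symmetry; apply: veq_mul1_inv; apply: veq_invl. Qed.

Lemma veq_invM a b : veq n (Wi (Wm a b)) (Wm (Wi b) (Wi a)).
Proof.
symmetry; apply: veq_mul1_inv.
by rewrite veq_assoc -(veq_assoc n b (Wi b)) veq_invr veq_unitl veq_invr.
Qed.

Lemma veq_inv1 : veq n (Wi W1) W1.
Proof. by symmetry; apply: veq_mul1_inv; apply: veq_unitl. Qed.

Lemma rho_sq k : veq n (Wm (Rh k) (Rh k)) W1.
Proof.
have [vk | vk] := boolP (valid n k); first exact: veq_R2.
by rewrite veq_Rh_out // veq_unitl.
Qed.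

Lemma rho_inv k : veq n (Wi (Rh k)) (Rh k).
Proof. by symmetry; apply: veq_mul1_inv; apply: rho_sq. Qed.

End GroupLaws.

Inductive atom := AWord of word | ARho of nat.

Definition atom_val (x : atom) : word :=
  match x with AWord w => w | ARho k => Rh k end.

Inductive gexp := GAtom of nat | G1 | GMul of gexp & gexp | GInv of gexp.

Section Normalise.
Variables (n : nat) (env : seq atom).

Definition env_atom k := nth (AWord W1) env k.

Fixpoint gexp_val (e : gexp) : word :=
  match e with
  | GAtom k => atom_val (env_atom k)
  | G1 => W1
  | GMul a b => Wm (gexp_val a) (gexp_val b)
  | GInv a => Wi (gexp_val a)
  end.

(* The letter (b, k) is the k-th atom if b, its inverse otherwise; the rho_k
   are involutions, so their letters are never negated. *)
Definition letter_inv (x : bool * nat) : bool * nat :=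
  if env_atom x.2 is ARho _ then x else (~~ x.1, x.2).

Definition letter_val (x : bool * nat) : word :=
  if x.1 then atom_val (env_atom x.2) else Wi (atom_val (env_atom x.2)).

Definition letters_val (l : seq (bool * nat)) : word :=
  foldr (fun x w => Wm (letter_val x) w) W1 l.

Fixpoint letters (e : gexp) : seq (bool * nat) :=
  match e with
  | GAtom k => [:: (true, k)]
  | G1 => [::]
  | GMul a b => letters a ++ letters b
  | GInv a => rev (map letter_inv (letters a))
  end.

Definition cons_reduce (x : bool * nat) (l : seq (bool * nat)) :=
  if l is y :: r then if y == letter_inv x then r else x :: l else [:: x].

Definition reduce (l : seq (bool * nat)) := foldr cons_reduce [::] l.

Lemma letters_val_cat l1 l2 :
  veq n (letters_val (l1 ++ l2)) (Wm (letters_val l1) (letters_val l2)).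
Proof.
elim: l1 => [|x l IH] /=; first by rewrite veq_unitl.
by rewrite IH veq_assoc.
Qed.

Lemma letter_val_inv x : veq n (letter_val (letter_inv x)) (Wi (letter_val x)).
Proof.
case: x => b k; rewrite /letter_inv /letter_val /=.
case E: (env_atom k) => [w | r]; case: b; rewrite /= ?E /= ?veq_invK ?rho_inv //.
Qed.

Lemma letters_val_inv l :
  veq n (letters_val (rev (map letter_inv l))) (Wi (letters_val l)).
Proof.
elim: l => [|x l IH] /=; first by rewrite veq_inv1.
by rewrite rev_cons -cats1 letters_val_cat IH /= veq_unitr letter_val_inv veq_invM.
Qed.

Lemma letters_valE e : veq n (gexp_val e) (letters_val (letters e)).
Proof.
elim: e => [k | | a IHa b IHb | a IHa] /=.
- by rewrite /letter_val /= veq_unitr.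
- by [].
- by rewrite letters_val_cat IHa IHb.
- by rewrite letters_val_inv IHa.
Qed.

Lemma letters_val_reduce l : veq n (letters_val (reduce l)) (letters_val l).
Proof.
elim: l => [|x l IH] //=; rewrite -IH.
case: (reduce l) => [|y r] //=; case: eqP => [-> | _] //=.
by rewrite -veq_assoc letter_val_inv veq_invr veq_unitl.
Qed.

Lemma gexp_val_reduce a b :
  reduce (letters a) = reduce (letters b) -> veq n (gexp_val a) (gexp_val b).
Proof.
by move=> eq_ab; rewrite !letters_valE -letters_val_reduce eq_ab letters_val_reduce.
Qed.

End Normalise.

Ltac atom_index x env :=
  lazymatch env with
  | cons x _ => constr:(0)
  | cons _ ?e => let k := atom_index x e in constr:(S k)
  end.

Ltac atom_of t := lazymatch t with Rh ?k => constr:(ARho k) | _ => constr:(AWord t) end.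

Ltac add_atoms t env :=
  lazymatch t with
  | W1 => env
  | Wm ?a ?b => let e := add_atoms a env in add_atoms b e
  | Wi ?a => add_atoms a env
  | _ => let x := atom_of t in
         match constr:(tt) with
         | _ => let _ := atom_index x env in env
         | _ => constr:(cons x env)
         end
  end.

Ltac reify t env :=
  lazymatch t with
  | W1 => constr:(G1)
  | Wm ?a ?b => let x := reify a env in let y := reify b env in constr:(GMul x y)
  | Wi ?a => let x := reify a env in constr:(GInv x)
  | _ => let x := atom_of t in let k := atom_index x env in constr:(GAtom k)
  end.

(* Proves [veq n A B] when A and B are equal in the free product of infinite
   cyclic groups on the atoms other than the [Rh k] and cyclic groups of order
   two on the [Rh k]. *)
Ltac free_group :=
  rewrite ?/Defs.conj ?/rconj ?/lam_up ?/lam_down;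
  lazymatch goal with
  | |- veq ?n ?A ?B =>
    let env := add_atoms A (@nil atom) in
    let env := add_atoms B env in
    let ea := reify A env in
    let eb := reify B env in
    change (veq n (gexp_val env ea) (gexp_val env eb));
    apply: gexp_val_reduce; vm_compute; reflexivity
  end.

Ltac free_step w := transitivity w; [free_group |].

Section WordRelations.
Variable n : nat.

Definition commute a b := veq n (Wm a b) (Wm b a).

Lemma commute_sym a b : commute a b -> commute b a.
Proof. by rewrite /commute => ->. Qed.

Lemma commute_inv a b : commute a b -> commute a (Wi b).
Proof.
rewrite /commute => ab; free_step (Wm (Wi b) (Wm (Wm b a) (Wi b))).
by rewrite -ab; free_group.
Qed.

Lemma commute_mul a b c : commute a b -> commute a c -> commute a (Wm b c).
Proof.
rewrite /commute => ab ac; free_step (Wm (Wm a b) c).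
by rewrite ab; free_step (Wm b (Wm a c)); rewrite ac; free_group.
Qed.

Lemma commute_wprod_rho a ks :
  (forall k, k \in ks -> commute a (Rh k)) -> commute a (wprod [seq Rh k | k <- ks]).
Proof.
elim: ks => [|k ks IH] /= aks; first by rewrite /commute; free_group.
apply: commute_mul; first by apply: aks; rewrite inE eqxx.
by apply: IH => j jks; apply: aks; rewrite inE jks orbT.
Qed.

Lemma commute_rho_rho s t : far s t -> commute (Rh s) (Rh t).
Proof.
move=> st; rewrite /commute.
have [vs | vs] := boolP (valid n s); last by rewrite veq_Rh_out //; free_group.
have [vt | vt] := boolP (valid n t); last by rewrite (veq_Rh_out vt); free_group.
exact: veq_RR.
Qed.

Lemma commute_rho_sigma s t : far s t -> commute (Rh s) (Sg t).
Proof.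
move=> st; rewrite /commute.
have [vs | vs] := boolP (valid n s); last by rewrite veq_Rh_out //; free_group.
have [vt | vt] := boolP (valid n t); last by rewrite veq_Sg_out //; free_group.
by symmetry; apply: veq_SR => //; move: st; rewrite /far; lia.
Qed.

Lemma commute_rho_lam_up s x : far s x -> commute (Rh s) (lam_up x).
Proof.
move=> sx; apply: commute_mul; first exact: commute_rho_rho.
exact/commute_inv/commute_rho_sigma.
Qed.

Lemma commute_rho_lam_down s x : far s x -> commute (Rh s) (lam_down x).
Proof.
move=> sx; apply: commute_mul; last exact: commute_rho_rho.
exact/commute_inv/commute_rho_sigma.
Qed.

Lemma commute_rho_rasc s lo hi : (s.+1 < lo) || (hi.+1 < s) -> commute (Rh s) (rasc lo hi).
Proof.
move=> s_out; apply: commute_wprod_rho => k; rewrite mem_iota => k_in.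
by apply: commute_rho_rho; rewrite /far; lia.
Qed.

Lemma rconjK s w : veq n (rconj s (rconj s w)) w.
Proof. free_group. Qed.

Lemma veq_rconj s a b : veq n (rconj s a) (rconj s b) -> veq n a b.
Proof. by move=> ab; rewrite -(rconjK s a) ab rconjK. Qed.

Lemma rconj_mul s a b : veq n (rconj s (Wm a b)) (Wm (rconj s a) (rconj s b)).
Proof. free_group. Qed.

Lemma rconj_commute s w : commute (Rh s) w -> veq n (rconj s w) w.
Proof. by move=> sw; free_step (Wm (Wm (Rh s) w) (Rh s)); rewrite sw; free_group. Qed.

Lemma rconj_conj_commute s w q :
  commute (Rh s) q -> veq n (rconj s (Defs.conj w q)) (Defs.conj (rconj s w) q).
Proof.
move=> sq; free_step (Wm (Wm (Rh s) (Wi q)) (Wm w (Wm q (Rh s)))).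
by rewrite -sq (commute_inv sq); free_group.
Qed.

Lemma wprod_cat s1 s2 : veq n (wprod (s1 ++ s2)) (Wm (wprod s1) (wprod s2)).
Proof.
elim: s1 => [|w s IH] /=; first by rewrite veq_unitl.
by rewrite IH veq_assoc.
Qed.

Lemma rasc_split lo mid hi :
  lo <= mid.+1 <= hi.+1 -> veq n (rasc lo hi) (Wm (rasc lo mid) (rasc mid.+1 hi)).
Proof.
move=> mid_in; rewrite /rasc -wprod_cat -map_cat.
have {2}-> : mid.+1 = lo + (mid.+1 - lo) by lia.
by rewrite -iotaD; have -> : mid.+1 - lo + (hi.+1 - mid.+1) = hi.+1 - lo by lia.
Qed.

Lemma rasc1 k : veq n (rasc k k) (Rh k).
Proof. by rewrite /rasc subSnn /= veq_unitr. Qed.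

Lemma rasc_rho_shift lo hi s : valid n s -> valid n s.+1 -> lo <= s -> s < hi ->
  veq n (Wm (rasc lo hi) (Rh s)) (Wm (Rh s.+1) (rasc lo hi)).
Proof.
move=> vs vs1 lo_s s_hi; have s_pos : 0 < s by case/andP: vs.
have sA : commute (Rh s.+1) (rasc lo s.-1) by apply: commute_rho_rasc; lia.
have sB : commute (Rh s) (rasc s.+2 hi) by apply: commute_rho_rasc; lia.
rewrite (@rasc_split lo s.-1 hi) ?prednK; try lia.
rewrite (@rasc_split s s hi) ?(@rasc_split s.+1 s.+1 hi) ?rasc1; try lia.
free_step (Wm (rasc lo s.-1) (Wm (Wm (Rh s) (Rh s.+1)) (Wm (rasc s.+2 hi) (Rh s)))).
rewrite -sB.
free_step (Wm (rasc lo s.-1) (Wm (Wm (Rh s) (Wm (Rh s.+1) (Rh s))) (rasc s.+2 hi))).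
rewrite veq_RRR //.
free_step (Wm (Wm (rasc lo s.-1) (Rh s.+1)) (Wm (Rh s) (Wm (Rh s.+1) (rasc s.+2 hi)))).
by rewrite -sA; free_group.
Qed.

End WordRelations.

#[export] Instance commute_proper n : Proper (veq n ==> veq n ==> iff) (commute n).
Proof. by move=> a a' Ha b b' Hb; rewrite /commute Ha Hb. Qed.

Section Cores.
Variable n : nat.

Lemma sigma_inv_succ k : valid n k -> valid n k.+1 ->
  veq n (Wi (Sg k.+1)) (Defs.conj (Wi (Sg k)) (Wm (Rh k.+1) (Rh k))).
Proof.
move=> vk vk1.
free_step (Wi (Wm (Wm (Sg k.+1) (Wm (Rh k) (Rh k.+1))) (Wm (Rh k.+1) (Rh k)))).
by rewrite -veq_RRS //; free_group.
Qed.

Lemma lam_up_succ k : valid n k -> valid n k.+1 ->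
  veq n (lam_up k.+1) (rconj k (rconj k.+1 (lam_up k))).
Proof.
move=> vk vk1; rewrite /lam_up sigma_inv_succ //.
free_step (Wm (Wm (Rh k.+1) (Wm (Rh k) (Rh k.+1))) (Wm (Wi (Sg k)) (Wm (Rh k.+1) (Rh k)))).
by rewrite -veq_RRR //; free_group.
Qed.

Lemma lam_down_succ k : valid n k -> valid n k.+1 ->
  veq n (lam_down k.+1) (rconj k (rconj k.+1 (lam_down k))).
Proof.
move=> vk vk1; rewrite /lam_down sigma_inv_succ //.
free_step (Wm (Rh k) (Wm (Rh k.+1) (Wm (Wi (Sg k)) (Wm (Rh k.+1) (Wm (Rh k) (Rh k.+1)))))).
by rewrite -veq_RRR //; free_group.
Qed.

End Cores.

Definition transp s x := if x == s then s.+1 else if x == s.+1 then s else x.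

Lemma transpL s : transp s s = s.+1.
Proof. by rewrite /transp eqxx. Qed.

Lemma transpR s : transp s s.+1 = s.
Proof. by rewrite /transp eqxx; case: eqP => //; lia. Qed.

Lemma transp_out s x : (x < s) || (s.+1 < x) -> transp s x = x.
Proof. by move=> x_out; rewrite /transp; do 2?case: eqP => //; lia. Qed.

Lemma transpK s : involutive (transp s).
Proof.
move=> x; have [-> | ] := eqVneq x s; first by rewrite transpL transpR.
have [-> _ | x_s1 x_s] := eqVneq x s.+1; first by rewrite transpR transpL.
by rewrite !transp_out //; lia.
Qed.

Lemma transp_mono s x y : x < y -> (x != s) || (y != s.+1) -> transp s x < transp s y.
Proof. by move=> xy not_swap; rewrite /transp; do 4?case: eqP => //; lia. Qed.

Lemma transp_inrange n s x : valid n s -> inrange n x -> inrange n (transp s x).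
Proof. by rewrite /valid /inrange /transp => vs xn; do 2?case: eqP => //; lia. Qed.

(* With [core] := lam_up (resp. lam_down), [lam_gen core x y] is lambda_xy
   (resp. lambda_yx) for x < y. *)
Section ConjugationAction.
Variables (n : nat) (core : nat -> word).
Hypothesis commute_rho_core : forall s x, far s x -> commute n (Rh s) (core x).
Hypothesis core_succ : forall k, valid n k -> valid n k.+1 ->
  veq n (core k.+1) (rconj k (rconj k.+1 (core k))).

Definition lam_gen x y := Defs.conj (core x) (rasc x.+1 y.-1).

Lemma rconj_lam_gen_far s x y : x < y -> (s.+1 < x) || (y < s) ->
  veq n (rconj s (lam_gen x y)) (lam_gen x y).
Proof.
move=> xy s_out; rewrite rconj_conj_commute; last by apply: commute_rho_rasc; lia.
by rewrite rconj_commute //; apply: commute_rho_core; rewrite /far; lia.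
Qed.

Lemma rconj_lam_gen_below s y : valid n s -> valid n s.+1 -> s.+1 < y ->
  veq n (rconj s (lam_gen s.+1 y)) (lam_gen s y).
Proof.
move=> vs vs1 sy; rewrite /lam_gen (@rasc_split n s.+1 s.+1) ?rasc1; try lia.
rewrite rconj_conj_commute; last by apply: commute_rho_rasc; lia.
by rewrite core_succ //; free_group.
Qed.

Lemma rconj_lam_gen_inside s x y : valid n s -> valid n s.+1 -> x < s -> s.+1 < y ->
  veq n (rconj s (lam_gen x y)) (lam_gen x y).
Proof.
move=> vs vs1 xs sy; rewrite /lam_gen.
free_step (Defs.conj (core x) (Wm (rasc x.+1 y.-1) (Rh s))).
rewrite rasc_rho_shift //; try lia.
free_step (Defs.conj (rconj s.+1 (core x)) (rasc x.+1 y.-1)).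
by rewrite rconj_commute //; apply: commute_rho_core; rewrite /far; lia.
Qed.

Lemma lam_gen_succ x y : x < y -> veq n (lam_gen x y.+1) (rconj y (lam_gen x y)).
Proof.
move=> xy; rewrite /lam_gen /= (@rasc_split n x.+1 y.-1 y) ?prednK ?rasc1; try lia.
free_group.
Qed.

(* The excluded pair (s, s+1) is reversed by (s s+1), which swaps the cores. *)
Lemma rconj_lam_gen s x y :
  valid n s -> x < y <= n -> (x != s) || (y != s.+1) ->
  veq n (rconj s (lam_gen x y)) (lam_gen (transp s x) (transp s y)).
Proof.
move=> vs /andP[xy yn] not_swap.
have vs1 : s.+1 < y -> valid n s.+1 by move=> ?; rewrite /valid; lia.
have [ys | sy] := ltnP y s.
  by rewrite !transp_out ?rconj_lam_gen_far //; lia.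
have [sx | xs] := ltnP s.+1 x.
  by rewrite !transp_out ?rconj_lam_gen_far //; lia.
case: (ltngtP x s) => [x_s | s_x | x_s]; last subst x.
- case: (ltngtP y s.+1) => [y_s1 | s1_y | ->].
  + have -> : y = s by lia.
    by rewrite transpL transp_out ?lam_gen_succ //; lia.
  + by rewrite !transp_out ?rconj_lam_gen_inside ?vs1 //; lia.
  + by rewrite transpR transp_out ?lam_gen_succ ?rconjK //; lia.
- have -> : x = s.+1 by lia.
  by rewrite transpR transp_out ?rconj_lam_gen_below ?vs1 //; lia.
- rewrite transpL transp_out; last lia.
  by rewrite -(rconj_lam_gen_below vs) ?vs1 ?rconjK //; lia.
Qed.

End ConjugationAction.

Section LambdaAction.
Variable n : nat.

Lemma wprod_rho_rev ks :
  veq n (wprod [seq Rh k | k <- rev ks]) (Wi (wprod [seq Rh k | k <- ks])).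
Proof.
elim: ks => [|k ks IH] /=; first by rewrite veq_inv1.
by rewrite rev_cons map_rcons -cats1 wprod_cat IH /=; free_group.
Qed.

Lemma lam_lt x y : x < y -> veq n (lam x y) (lam_gen lam_up x y).
Proof. by move=> xy; rewrite /lam xy /= /rdesc wprod_rho_rev. Qed.

Lemma lam_gt x y : y < x -> veq n (lam x y) (lam_gen lam_down y x).
Proof. by move=> yx; rewrite /lam ltnNge (ltnW yx) /= /rdesc wprod_rho_rev. Qed.

Lemma lam_gen_adj core s : veq n (lam_gen core s s.+1) (core s).
Proof. by rewrite /lam_gen /rasc subnn /=; free_group. Qed.

Lemma rconj_lam s x y : valid n s -> inrange n x -> inrange n y -> x != y ->
  veq n (rconj s (lam x y)) (lam (transp s x) (transp s y)).
Proof.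
move=> vs /andP[_ xn] /andP[_ yn] x_ne_y.
case: (ltngtP x y) => [xy | yx | x_y]; last by rewrite x_y eqxx in x_ne_y.
- have [[-> ->] | not_swap] : (x = s /\ y = s.+1) \/ ((x != s) || (y != s.+1)) by lia.
    by rewrite transpL transpR lam_lt ?lam_gt // !lam_gen_adj; free_group.
  rewrite lam_lt // rconj_lam_gen ?lam_lt ?transp_mono //.
  + exact: commute_rho_lam_up.
  + exact: lam_up_succ.
  + by rewrite xy.
- have [[-> ->] | not_swap] : (y = s /\ x = s.+1) \/ ((y != s) || (x != s.+1)) by lia.
    by rewrite transpL transpR lam_gt ?lam_lt // !lam_gen_adj; free_group.
  rewrite lam_gt // rconj_lam_gen ?lam_gt ?transp_mono //.
  + exact: commute_rho_lam_down.
  + exact: lam_down_succ.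
  + by rewrite yx.
Qed.

End LambdaAction.

Section TupleReduction.
Variables (n : nat) (P : seq nat -> Prop).
Hypothesis P_transp : forall s t, valid n s -> uniq t -> all (inrange n) t ->
  P (map (transp s) t) -> P t.
Hypothesis P_iota : forall m, m <= n -> P (iota 1 m).

(* The entry following the prefix 1, ..., j is lowered to j+1 by
   transpositions (s s+1) with s > j, which fix the prefix. *)
Lemma transp_invariant_prefix k : forall j t, size t = j + k ->
  uniq t -> all (inrange n) t -> take j t = iota 1 j -> P t.
Proof.
elim: k => [|k IHk] j t size_t uniq_t in_t take_t.
  rewrite -(take_oversize (s := t) (n := j)) ?take_t ?size_t ?addn0 //.
  apply: P_iota; rewrite -(addn0 j) -size_t -(size_iota 1 n).
  apply: uniq_leq_size => // x /(allP in_t).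
  by rewrite mem_iota /inrange; lia.
have j_lt : j < size t by lia.
have [d t_j] : exists d, nth 0 t j = j.+1 + d.
  exists (nth 0 t j - j.+1).
  have: nth 0 t j \notin take j t.
    move: uniq_t; rewrite -{1}(cat_take_drop j t) cat_uniq.
    case/and3P=> _ /hasPn drop_notin _.
    apply: drop_notin.
    by rewrite -[j in nth 0 t j]addn0 -nth_drop mem_nth // size_drop; lia.
  have: inrange n (nth 0 t j) by apply: (allP in_t); rewrite mem_nth.
  rewrite take_t mem_iota /inrange; lia.
elim: d t size_t uniq_t in_t take_t t_j {j_lt} => [|d IHd] t size_t uniq_t in_t take_t t_j.
  apply: (IHk j.+1); rewrite ?size_t ?addnS //.
  rewrite (take_nth 0) ?size_t; last lia.
  by rewrite take_t t_j addn0 -cats1 -[j.+1]addn1 iotaD addnC.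
have v : valid n (j.+1 + d).
  have: inrange n (nth 0 t j) by apply: (allP in_t); rewrite mem_nth // size_t; lia.
  by rewrite t_j /inrange /valid; lia.
apply: (P_transp v uniq_t in_t); apply: IHd.
- by rewrite size_map.
- by rewrite map_inj_uniq //; apply: (can_inj (transpK _)).
- by apply/allP => _ /mapP[x xt ->]; apply: transp_inrange v _; apply: (allP in_t).
- rewrite -map_take take_t; apply: map_id_in => x; rewrite mem_iota => x_in.
  by rewrite transp_out //; lia.
- by rewrite (nth_map 0) ?size_t ?t_j -?addSnnS ?transpR //; lia.
Qed.

Lemma transp_invariant_all t : uniq t -> all (inrange n) t -> P t.
Proof.
by move=> uniq_t in_t; apply: (@transp_invariant_prefix (size t) 0); rewrite ?add0n ?take0.
Qed.

End TupleReduction.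

Section LambdaRelations.
Variable n : nat.

Definition ybe_rel i j k :=
  veq n (Wm (lam k i) (Wm (lam k j) (lam i j))) (Wm (lam i j) (Wm (lam k j) (lam k i))).

Lemma lam_commute_transp s i j k l : valid n s ->
  all (inrange n) [:: i; j; k; l] -> uniq [:: i; j; k; l] ->
  commute n (lam (transp s i) (transp s j)) (lam (transp s k) (transp s l)) ->
  commute n (lam i j) (lam k l).
Proof.
move=> vs /and5P[ri rj rk rl _] U; rewrite /commute => C.
apply: (veq_rconj (s := s)); rewrite !rconj_mul !rconj_lam //;
  by move: U; rewrite /= !inE; lia.
Qed.

Lemma ybe_rel_transp s i j k : valid n s ->
  all (inrange n) [:: k; i; j] -> uniq [:: k; i; j] ->
  ybe_rel (transp s i) (transp s j) (transp s k) -> ybe_rel i j k.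
Proof.
move=> vs /and4P[rk ri rj _] U; rewrite /ybe_rel => Y.
apply: (veq_rconj (s := s)); rewrite !rconj_mul !rconj_lam //;
  by move: U; rewrite /= !inE; lia.
Qed.

Lemma lam_commute_base : 4 <= n -> commute n (lam 1 2) (lam 3 4).
Proof.
move=> n4; have v1 : valid n 1 by rewrite /valid; lia.
have v3 : valid n 3 by rewrite /valid; lia.
have -> : lam 1 2 = Wm W1 (Wm (lam_up 1) W1) by [].
have -> : lam 3 4 = Wm W1 (Wm (lam_up 3) W1) by [].
rewrite !veq_unitl !veq_unitr; apply: commute_sym; apply: commute_mul.
  by apply/commute_sym/commute_rho_lam_up.
apply/commute_inv/commute_sym/commute_mul; first by apply/commute_sym/commute_rho_sigma.
by apply/commute_inv/commute_sym/veq_SS.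
Qed.

Lemma ybe_rel_base : 3 <= n -> ybe_rel 2 3 1.
Proof.
move=> n3; have v1 : valid n 1 by rewrite /valid; lia.
have v2 : valid n 2 by rewrite /valid; lia.
have M1 : veq n (Wm (Wi (Sg 1)) (Wm (Rh 2) (Rh 1))) (Wm (Rh 2) (Wm (Rh 1) (Wi (Sg 2)))).
  by rewrite (sigma_inv_succ (k := 1)) //; free_group.
have M2 : veq n (Wm (Wi (Sg 2)) (Wm (Rh 1) (Rh 2))) (Wm (Rh 1) (Wm (Rh 2) (Wi (Sg 1)))).
  by rewrite (sigma_inv_succ (k := 1)) //; free_group.
have B : veq n (Wm (Wi (Sg 1)) (Wm (Wi (Sg 2)) (Wi (Sg 1))))
               (Wm (Wi (Sg 2)) (Wm (Wi (Sg 1)) (Wi (Sg 2)))).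
  free_step (Wi (Wm (Sg 1) (Wm (Sg 2) (Sg 1)))).
  by rewrite veq_SSS //; free_group.
have R := veq_RRR v1 v2.
(* Both sides reduce to rho_1 rho_2 rho_1 sigma_2^-1 sigma_1^-1 sigma_2^-1. *)
rewrite /ybe_rel /lam /rdesc /rasc /=.
free_step (Wm (Rh 1) (Wm (Wm (Wi (Sg 1)) (Wm (Rh 2) (Rh 1))) (Wm (Wi (Sg 1)) (Wi (Sg 2))))).
rewrite M1.
free_step (Wm (Wm (Rh 1) (Wm (Rh 2) (Rh 1))) (Wm (Wi (Sg 2)) (Wm (Wi (Sg 1)) (Wi (Sg 2))))).
rewrite -B; symmetry.
free_step (Wm (Rh 2) (Wm (Wi (Sg 2)) (Wm (Wm (Rh 2) (Rh 1))
  (Wm (Wm (Wi (Sg 1)) (Wm (Rh 2) (Rh 1))) (Wi (Sg 1)))))).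
rewrite M1.
free_step (Wm (Rh 2) (Wm (Wi (Sg 2)) (Wm (Wm (Wm (Rh 2) (Wm (Rh 1) (Rh 2))) (Rh 1))
  (Wm (Wi (Sg 2)) (Wi (Sg 1)))))).
rewrite -R.
free_step (Wm (Rh 2) (Wm (Wm (Wi (Sg 2)) (Wm (Rh 1) (Rh 2))) (Wm (Wi (Sg 2)) (Wi (Sg 1))))).
rewrite M2.
free_step (Wm (Wm (Rh 2) (Wm (Rh 1) (Rh 2))) (Wm (Wi (Sg 1)) (Wm (Wi (Sg 2)) (Wi (Sg 1))))).
by rewrite -R; free_group.
Qed.

Lemma lam_commute i j k l : inrange n i -> inrange n j -> inrange n k -> inrange n l ->
  uniq [:: i; j; k; l] -> commute n (lam i j) (lam k l).
Proof.
pose P t := forall i j k l, t = [:: i; j; k; l] -> commute n (lam i j) (lam k l).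
move=> ri rj rk rl U; apply: (@transp_invariant_all n P _ _ [:: i; j; k; l]) => //.
- move=> s t vs Ut Rt Pt i' j' k' l' t_eq; subst t.
  exact: lam_commute_transp (Pt _ _ _ _ erefl).
- move=> m mn i' j' k' l' e; have m4 : m = 4 by rewrite -(size_iota 1 m) e.
  by move: e; rewrite m4 => -[<- <- <- <-]; apply: lam_commute_base; rewrite -m4.
- by rewrite /= ri rj rk rl.
Qed.

Lemma lam_ybe i j k : inrange n i -> inrange n j -> inrange n k ->
  uniq [:: i; j; k] -> ybe_rel i j k.
Proof.
pose P t := forall i j k, t = [:: k; i; j] -> ybe_rel i j k.
move=> ri rj rk U; apply: (@transp_invariant_all n P _ _ [:: k; i; j]) => //.
- move=> s t vs Ut Rt Pt i' j' k' t_eq; subst t.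
  exact: ybe_rel_transp (Pt _ _ _ erefl).
- move=> m mn i' j' k' e; have m3 : m = 3 by rewrite -(size_iota 1 m) e.
  by move: e; rewrite m3 => -[<- <- <-]; apply: ybe_rel_base; rewrite -m3.
- by move: U; rewrite /= !inE; lia.
- by rewrite /= ri rj rk.
Qed.

End LambdaRelations.

Section Conjugates.
Variable n : nat.

Lemma conj_commute a b : commute n b a -> veq n (Defs.conj a b) a.
Proof. by move=> ba; rewrite /Defs.conj -ba; free_group. Qed.

Lemma lam_conj_disjoint i j k l :
  inrange n i -> inrange n j -> inrange n k -> inrange n l -> uniq [:: i; j; k; l] ->
  veq n (Defs.conj (lam k l) (lam i j)) (lam k l) /\
  veq n (Defs.conj (lam k l) (Wi (lam i j))) (lam k l).
Proof.
move=> ri rj rk rl U; have C := lam_commute ri rj rk rl U.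
split; apply: conj_commute => //.
exact/commute_sym/commute_inv/commute_sym.
Qed.

Lemma lam_ik_conj i j k : inrange n i -> inrange n j -> inrange n k -> uniq [:: i; j; k] ->
  veq n (Defs.conj (lam i k) (lam i j))
        (Wm (Defs.conj (lam k j) (lam i j)) (Wm (lam i k) (Wi (lam k j)))) /\
  veq n (Defs.conj (lam i k) (Wi (lam i j)))
        (Wm (Wi (lam k j)) (Wm (lam i k) (Defs.conj (lam k j) (Wi (lam i j))))).
Proof.
move=> ri rj rk U; have Y : ybe_rel n k j i.
  by apply: lam_ybe => //; move: U; rewrite /= !inE; lia.
split.
  free_step (Wm (Wi (lam i j)) (Wm (Wm (lam i k) (Wm (lam i j) (lam k j))) (Wi (lam k j)))).
  by rewrite Y; free_group.
free_step (Wm (Wi (lam k j)) (Wm (Wm (lam k j) (Wm (lam i j) (lam i k))) (Wi (lam i j)))).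
by rewrite -Y; free_group.
Qed.

Lemma lam_ki_conj i j k : inrange n i -> inrange n j -> inrange n k -> uniq [:: i; j; k] ->
  veq n (Defs.conj (lam k i) (lam i j))
        (Wm (lam k j) (Wm (lam k i) (Wi (Defs.conj (lam k j) (lam i j))))) /\
  veq n (Defs.conj (lam k i) (Wi (lam i j)))
        (Wm (Wi (Defs.conj (lam k j) (Wi (lam i j)))) (Wm (lam k i) (lam k j))).
Proof.
move=> ri rj rk U; have Y := lam_ybe ri rj rk U.
split.
  free_step (Wm (Wi (lam i j)) (Wm (Wm (lam k i) (Wm (lam k j) (lam i j)))
    (Wm (Wi (lam i j)) (Wm (Wi (lam k j)) (lam i j))))).
  by rewrite Y; free_group.
free_step (Wm (lam i j) (Wm (Wi (lam k j)) (Wm (Wi (lam i j))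
  (Wm (Wm (lam i j) (Wm (lam k j) (lam k i))) (Wi (lam i j)))))).
by rewrite -Y; free_group.
Qed.

Lemma lam_jk_conj i j k : inrange n i -> inrange n j -> inrange n k -> uniq [:: i; j; k] ->
  veq n (Defs.conj (lam j k) (lam i j))
        (Wm (lam i k) (Wm (lam j k) (Wm (lam k j)
           (Wm (Wi (lam i k)) (Wi (Defs.conj (lam k j) (lam i j))))))) /\
  veq n (Defs.conj (lam j k) (Wi (lam i j)))
        (Wm (Wi (Defs.conj (lam k j) (Wi (lam i j)))) (Wm (Wi (lam i k))
           (Wm (lam k j) (Wm (lam j k) (lam i k))))).
Proof.
move=> ri rj rk U.
have Ykji : ybe_rel n k j i by apply: lam_ybe => //; move: U; rewrite /= !inE; lia.
have Yjki : ybe_rel n j k i by apply: lam_ybe => //; move: U; rewrite /= !inE; lia.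
split.
  free_step (Wm (Wi (lam i j)) (Wm (Wm (lam j k) (Wm (lam i k) (lam i j)))
    (Wm (Wi (lam i j)) (Wm (Wi (lam i k)) (lam i j))))).
  rewrite -Yjki; free_step (Wm (lam i k) (Wm (lam j k) (Wm (lam k j)
    (Wm (Wi (Wm (lam i k) (Wm (lam i j) (lam k j)))) (lam i j))))).
  by rewrite Ykji; free_group.
free_step (Wm (lam i j) (Wm (Wi (lam i k)) (Wm (Wi (lam i j))
  (Wm (Wm (lam i j) (Wm (lam i k) (lam j k))) (Wi (lam i j)))))).
rewrite Yjki; free_step (Wm (lam i j) (Wm (Wm (Wi (Wm (lam k j) (Wm (lam i j) (lam i k))))
  (lam k j)) (Wm (lam j k) (lam i k)))).
by rewrite -Ykji; free_group.
Qed.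

End Conjugates.

Unset Implicit Arguments.

Theorem lemma5 (n : nat) (hn : 3 <= n) :
  (* 1) *)
  (forall i j k l : nat,
     inrange n i -> inrange n j -> inrange n k -> inrange n l ->
     uniq [:: i; j; k; l] ->
     maxn i j < maxn k l ->
     veq n (conj (lam k l) (lam i j)) (lam k l) /\
     veq n (conj (lam k l) (Wi (lam i j))) (lam k l)) /\
  (* 2) *)
  (forall i j k : nat,
     inrange n i -> inrange n j -> inrange n k -> uniq [:: i; j; k] ->
     (i < j < k) || (j < i < k) ->
     veq n (conj (lam i k) (lam i j))
           (Wm (conj (lam k j) (lam i j)) (Wm (lam i k) (Wi (lam k j)))) /\
     veq n (conj (lam i k) (Wi (lam i j)))
           (Wm (Wi (lam k j)) (Wm (lam i k) (conj (lam k j) (Wi (lam i j)))))) /\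
  (* 3) *)
  (forall i j k : nat,
     inrange n i -> inrange n j -> inrange n k -> uniq [:: i; j; k] ->
     (i < j < k) || (j < i < k) ->
     veq n (conj (lam k i) (lam i j))
           (Wm (lam k j) (Wm (lam k i) (Wi (conj (lam k j) (lam i j))))) /\
     veq n (conj (lam k i) (Wi (lam i j)))
           (Wm (Wi (conj (lam k j) (Wi (lam i j)))) (Wm (lam k i) (lam k j)))) /\
  (* 4) *)
  (forall i j k : nat,
     inrange n i -> inrange n j -> inrange n k -> uniq [:: i; j; k] ->
     (i < j < k) || (j < i < k) ->
     veq n (conj (lam j k) (lam i j))
           (Wm (lam i k) (Wm (lam j k) (Wm (lam k j)
              (Wm (Wi (lam i k)) (Wi (conj (lam k j) (lam i j))))))) /\
     veq n (conj (lam j k) (Wi (lam i j)))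
           (Wm (Wi (conj (lam k j) (Wi (lam i j)))) (Wm (Wi (lam i k))
              (Wm (lam k j) (Wm (lam j k) (lam i k)))))).
Proof.
split; first by move=> i j k l ri rj rk rl U _; apply: lam_conj_disjoint.
split; first by move=> i j k ri rj rk U _; apply: lam_ik_conj.
split; first by move=> i j k ri rj rk U _; apply: lam_ki_conj.
by move=> i j k ri rj rk U _; apply: lam_jk_conj.
Qed.
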